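(* Let $\mathbf{k}$ be a field, $p\ge3$, $S=\mathbf{k}[e_1,\dots,e_{2p}]$, and let $\mathcal{F}$, $\mathcal{G}$ and $\varphi=(\varphi_i)_{i\ge0}:\mathcal{F}\to\mathcal{G}$ be as defined below. Then $\varphi$ is a map of chain complexes.
   Context: Let $V=\operatorname{span}_{\mathbf{k}}(e_1,\dots,e_{p-1})$, $W=\operatorname{span}_{\mathbf{k}}(e_{p+1},\dots,e_{2p-1})$; for $v\in V$ let $v'\in W$ be its image under $e_i\mapsto e_{p+i}$. For $U\in\{V,W\}$, $\partial^U:S\otimes\bigwedge^kU\to S\otimes\bigwedge^{k-1}U$ is $s\otimes u_1\wedge\cdots\wedge u_k\mapsto\sum_l(-1)^lsu_l\otimes u_1\wedge\cdots\widehat{u_l}\cdots\wedge u_k$. $\mathcal{F}$: $C_{a,b}=S\otimes\bigwedge^{a+2}V\otimes\bigwedge^bW$ ($a,b\ge0$), $\partial^h=\partial^V\otimes1:C_{a,b}\to C_{a-1,b}$ (zero if $a=0$), $\partial^v(s\otimes\omega\otimes w_1\wedge\cdots\wedge w_b)=(-1)^a\sum_l(-1)^lsw_l\otimes\omega\otimes w_1\wedge\cdots\widehat{w_l}\cdots\wedge w_b$; $\mathcal{F}_n=\bigoplus_{a+b=n}C_{a,b}$ with differential $\partial^h+\partial^v$. $\mathcal{G}$: for $i\ge1$, $M_i=(\bigwedge^iW\otimes W)/D_i$ where $D_i$ is spanned by $\sum_{l=1}^{i+1}(-1)^l(w_1\wedge\cdots\widehat{w_l}\cdots\wedge w_{i+1})\otimes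 w_l$; classes written $[\eta\otimes w]$. $\mathcal{G}_0=S$, $\mathcal{G}_i=S\otimes M_i$, differential $s\otimes[(w_1\wedge\cdots\wedge w_i)\otimes w]\mapsto\sum_l(-1)^lsw_l\otimes[(w_1\wedge\cdots\widehat{w_l}\cdots\wedge w_i)\otimes w]$ for $i\ge2$ and $s\otimes[w_1\otimes w]\mapsto-sw_1w$ for $i=1$ ($M_i\cong\mathbb{S}^{(2,1^{i-1})}W$; $\mathcal{G}$ resolves $S/\langle e_{p+1},\dots,e_{2p-1}\rangle^2$). $\varphi$: zero on $C_{a,b}$ for $a\ge1$; $\varphi_0(s\otimes v_1\wedge v_2)=s(v_1v_2'-v_2v_1')$ on $C_{0,0}$; $\varphi_i(s\otimes v_1\wedge v_2\otimes\eta)=sv_1\otimes[\eta\otimes v_2']-sv_2\otimes[\eta\otimes v_1']$ on $C_{0,i}$, $i\ge1$. *)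

From HB Require Import structures.
From mathcomp Require Import all_boot all_order all_algebra.
From mathcomp Require Import mpoly.
Set Implicit Arguments. Unset Strict Implicit. Unset Printing Implicit Defensive.
Import GRing.Theory.
Local Open Scope ring_scope.

(* Concrete encoding (all free modules are written in the standard bases):
   - S = k[e_1,...,e_{2p}] = {mpoly k[2*p]}, e_{j+1} = 'X_j.
   - V has basis e_1..e_{p-1}, indexed by i : 'I_(p-1) (i <-> e_{i+1});
     W has basis e_{p+1}..e_{2p-1}, indexed by i : 'I_(p-1) (i <-> e_{p+i+1}),
     so that v' (image of e_{i+1} under e_i |-> e_{p+i}) has the same index i.
   - A basis element of /\^k U is u_{j1} /\ ... /\ u_{jk} with j1 < ... < jk,
     encoded by the set {j1,...,jk}; the position of j in A is
     #|[set x in A | (val x <= val j)%N]| (1-based). *)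

Section Complexes.
Variables (k : fieldType) (p : nat).

Definition S := {mpoly k[2 * p]}.
Definition idx := 'I_(p - 1).

(* the variable e_{j+1} of S (0 if out of range, which never happens below) *)
Definition evar (j : nat) : S :=
  match @insub nat (fun m => m < 2 * p)%N _ j with
  | Some i => 'X_i
  | None => 0
  end.

Definition ev (i : idx) : S := evar i.
Definition ew (i : idx) : S := evar (p + i).

Definition pos (A : {set idx}) (j : idx) : nat := #|[set x in A | (val x <= val j)%N]|.
Definition sgn (l : nat) : S := (-1) ^+ l.

(* basis element (A,B) <-> 1 (x) /\_{A} V (x) /\_{B} W, lying in C_{a,b} with
   a = #|A| - 2, b = #|B| (only #|A| >= 2 is relevant) *)
Definition FB := ({set idx} * {set idx})%type.
Definition Fel := {ffun FB -> S}.

Definition inF (n : nat) (x : Fel) : Prop :=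
  forall A B, x (A, B) != 0 -> (2 <= #|A|)%N /\ (#|A| + #|B| = n + 2)%N.

(* (partial^h + partial^v) applied to the basis element (A,B) *)
Definition dF_basis (u : FB) : Fel :=
  let: (A, B) := u in
  [ffun v : FB =>
     (if (2 < #|A|)%N then
        \sum_(j in A) (if v == (A :\ j, B) then sgn (pos A j) * ev j else 0)
      else 0)
   + sgn (#|A| - 2) *
       \sum_(j in B) (if v == (A, B :\ j) then sgn (pos B j) * ew j else 0)].

Definition dF (x : Fel) : Fel :=
  [ffun v => \sum_(u : FB) x u * dF_basis u v].

(* G_0 = S.  For i >= 1, G_i = S (x) M_i with M_i = (/\^i W (x) W) / D_i;
   we work with representatives in S (x) /\^i W (x) W, whose basis element
   (B, w) <-> 1 (x) (/\_{B} W (x) w_w), #|B| = i. *)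
Definition GB := ({set idx} * idx)%type.
Definition Gel := {ffun GB -> S}.

(* differential G_i -> G_{i-1} for i >= 2, on representatives *)
Definition dG_basis (g : GB) : Gel :=
  let: (B, w) := g in
  [ffun h : GB =>
     \sum_(j in B) (if h == (B :\ j, w) then sgn (pos B j) * ew j else 0)].

Definition dG (y : Gel) : Gel :=
  [ffun h => \sum_(g : GB) y g * dG_basis g h].

Definition dG1_basis (g : GB) : S :=
  let: (B, w) := g in \sum_(j in B) (- (ew j * ew w)).

Definition dG1 (y : Gel) : S := \sum_(g : GB) y g * dG1_basis g.

(* generator of D_i attached to the basis element /\_{B'} W, #|B'| = i+1 :
   sum_l (-1)^l (w_1 /\ .. ^w_l .. /\ w_{i+1}) (x) w_l *)
Definition relG (B' : {set idx}) : Gel :=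
  [ffun h : GB =>
     \sum_(j in B') (if h == (B' :\ j, j) then sgn (pos B' j) else 0)].

(* phi_0 : C_{0,0} -> S, s (x) v1 /\ v2 |-> s (v1 v2' - v2 v1'), zero elsewhere *)
Definition phi0_basis (u : FB) : S :=
  let: (A, B) := u in
  if (#|A| == 2)%N && (#|B| == 0)%N then
    \sum_(i in A) \sum_(j in A | (val i < val j)%N) (ev i * ew j - ev j * ew i)
  else 0.

Definition phi0 (x : Fel) : S := \sum_(u : FB) x u * phi0_basis u.

(* phi_i (i >= 1) : C_{0,i} -> G_i,
   s (x) v1 /\ v2 (x) eta |-> s v1 (x) [eta (x) v2'] - s v2 (x) [eta (x) v1'],
   zero on C_{a,b} with a >= 1 *)
Definition phiG_basis (u : FB) : Gel :=
  let: (A, B) := u in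
  [ffun h : GB =>
     if (#|A| == 2)%N && (1 <= #|B|)%N then
       \sum_(i in A) \sum_(j in A | (val i < val j)%N)
          ((if h == (B, j) then ev i else 0) - (if h == (B, i) then ev j else 0))
     else 0].

Definition phiG (x : Fel) : Gel :=
  [ffun h => \sum_(u : FB) x u * phiG_basis u h].

End Complexes.

From HB Require Import structures.
From mathcomp Require Import all_boot all_order all_algebra.
From mathcomp Require Import mpoly.
From mathcomp Require Import ring zify.
Set Implicit Arguments. Unset Strict Implicit. Unset Printing Implicit Defensive.
Import GRing.Theory.
Local Open Scope ring_scope.

(* phi and both differentials are S-linear, so it suffices to check the
   identity on a basis element 1 (x) /\_A V (x) /\_B W of C_{a,b}, and phi
   vanishes unless a = 0.  For a = 0 only the vertical differential of F
   contributes, and phi visibly commutes with deleting a factor w_l of eta,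
   which is what the differential of G does.  For a = 1, d_G phi = 0 and
   phi kills the vertical part; the horizontal part is an alternating sum
   over the three ways of deleting one of v1, v2, v3, whose six terms cancel
   in pairs exactly as in d^2 = 0 for the Koszul complex.  For a >= 2 every
   term is zero.  In particular no relation from D_i is ever needed, and
   nothing depends on p >= 3. *)

Lemma sum_delta1_mulr (R : pzSemiRingType) (T : finType) (u : T) (g : R) (F : T -> R) :
  \sum_(t : T) (if t == u then g else 0) * F t = g * F u.
Proof.
rewrite (bigD1 u) //= eqxx big1 ?addr0 // => t /negbTE ->.
by rewrite mul0r.
Qed.

Lemma sum_delta_mulr (R : pzSemiRingType) (T J : finType) (P : pred J)
    (f : J -> T) (g : J -> R) (F : T -> R) :
  \sum_(t : T) (\sum_(j | P j) (if t == f j then g j else 0)) * F t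
  = \sum_(j | P j) g j * F (f j).
Proof.
under eq_bigr do rewrite mulr_suml.
by rewrite exchange_big; apply: eq_bigr => j _; rewrite sum_delta1_mulr.
Qed.

Lemma eq_sum_comp (R : pzSemiRingType) (J T U : finType) (x : J -> R)
    (F : J -> T -> R) (G : J -> U -> R) (Phi : T -> R) (Psi : U -> R) :
  (forall j, x j != 0 -> \sum_t F j t * Phi t = \sum_u G j u * Psi u) ->
  \sum_t (\sum_j x j * F j t) * Phi t = \sum_u (\sum_j x j * G j u) * Psi u.
Proof.
have expand (V : finType) (H : J -> V -> R) (Chi : V -> R) :
    \sum_v (\sum_j x j * H j v) * Chi v = \sum_j x j * \sum_v H j v * Chi v.
  under eq_bigr do rewrite mulr_suml.
  rewrite exchange_big; apply: eq_bigr => j _; rewrite mulr_sumr.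
  by apply: eq_bigr => v _; rewrite mulrA.
move=> eqFG; rewrite !expand; apply: eq_bigr => j _.
by have [->|/eqFG ->] := eqVneq (x j) 0; rewrite ?mul0r.
Qed.

Lemma big_set3 (R : nmodType) (T : finType) (a b c : T) (F : T -> R) :
  a != b -> a != c -> b != c ->
  \sum_(t in [set a; b; c]) F t = F a + F b + F c.
Proof.
move=> ab ac bc.
rewrite -setUA big_setU1 /=; last by rewrite !inE negb_or ab ac.
by rewrite big_setU1 /= ?inE // big_set1 addrA.
Qed.

Lemma setD1_set3 (T : finType) (a b c : T) : a != b -> a != c -> b != c ->
  [/\ [set a; b; c] :\ a = [set b; c], [set a; b; c] :\ b = [set a; c]
    & [set a; b; c] :\ c = [set a; b]].
Proof.
move=> /negbTE ab /negbTE ac /negbTE bc.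
have [ba ca cb] : [/\ (b == a) = false, (c == a) = false & (c == b) = false].
  by rewrite !(eq_sym _ a) (eq_sym c b) ab ac bc.
split; apply/setP => t; rewrite !inE.
- by have [->|_] := eqVneq t a; rewrite ?eqxx ?ab ?ac.
- by have [->|_] := eqVneq t b; rewrite ?eqxx ?ba ?bc ?orbF.
- by have [->|_] := eqVneq t c; rewrite ?eqxx ?ca ?cb ?orbF.
Qed.

Section OrdinalSets.
Variable n : nat.
Implicit Types a b c : 'I_n.

Lemma ltn_ord_neq a b : (a < b)%N -> a != b.
Proof. by apply: contraTneq => ->; rewrite ltnn. Qed.

Lemma big_set2_ltn (R : nmodType) a b (F : 'I_n -> 'I_n -> R) : (a < b)%N ->
  \sum_(i in [set a; b]) \sum_(j in [set a; b] | (i < j)%N) F i j = F a b.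
Proof.
move=> ab.
rewrite big_setU1 ?inE ?ltn_ord_neq //= big_set1 !big_mkcondr /=.
rewrite !big_setU1 ?inE ?ltn_ord_neq //= !big_set1.
by rewrite !ltnn ab ltnNge (ltnW ab) /= !add0r addr0.
Qed.

Lemma card3_sorted (A : {set 'I_n}) : #|A| = 3%N ->
  exists a b c, [/\ (a < b)%N, (b < c)%N & A = [set a; b; c]].
Proof.
move=> A3.
have : sorted (relpre val ltn) (enum A).
  apply: sorted_filter => [? ? ?|]; first exact: ltn_trans.
  by rewrite -enumT -sorted_map val_enum_ord iota_ltn_sorted.
move: (set_enum A); rewrite cardE in A3.
case: (enum A) A3 => [|a [|b [|c [|]]]] //= _ eA /and3P[ab bc _].
exists a, b, c; split => //; rewrite -eA.
by apply/setP => t; rewrite !inE orbA.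
Qed.

End OrdinalSets.

Section ChainMap.
Variables (k : fieldType) (p : nat).
Local Notation I := (idx p).
Local Notation ev := (ev k).
Local Notation ew := (ew k).
Local Notation sgn := (sgn k p).
Implicit Types (A B : {set I}) (a b c i j : I).

Lemma pos_sum A j : pos A j = (\sum_(x in A) (x <= j))%N.
Proof. by rewrite /pos -sum1dep_card big_mkcondr. Qed.

Lemma pos_set3 a b c : (a < b)%N -> (b < c)%N ->
  [/\ pos [set a; b; c] a = 1%N, pos [set a; b; c] b = 2%N
    & pos [set a; b; c] c = 3%N].
Proof.
move=> ab bc; have ac := ltn_trans ab bc.
rewrite !pos_sum !big_set3 ?ltn_ord_neq // !leqnn.
by rewrite (ltnW ab) (ltnW bc) (ltnW ac) (ltn_geF ab) (ltn_geF bc) (ltn_geF ac).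
Qed.

Lemma koszul_set3_eq0 a b c (Phi : {set I} -> S k p) (Y : I -> S k p) :
  (a < b)%N -> (b < c)%N ->
  (forall i j, (i < j)%N -> Phi [set i; j] = ev i * Y j - ev j * Y i) ->
  \sum_(m in [set a; b; c])
     sgn (pos [set a; b; c] m) * ev m * Phi ([set a; b; c] :\ m) = 0.
Proof.
move=> ab bc PhiE; have ac := ltn_trans ab bc.
have [pa pb pc] := pos_set3 ab bc.
have [Da Db Dc] := setD1_set3 (ltn_ord_neq ab) (ltn_ord_neq ac) (ltn_ord_neq bc).
rewrite big_set3 ?ltn_ord_neq // pa pb pc Da Db Dc !PhiE // /sgn.
ring.
Qed.

Lemma sum_dF_basis A B (Phi : FB p -> S k p) :
  \sum_v dF_basis k (A, B) v * Phi v =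
    (if (2 < #|A|)%N then \sum_(j in A) sgn (pos A j) * ev j * Phi (A :\ j, B)
     else 0)
    + sgn (#|A| - 2) * \sum_(j in B) sgn (pos B j) * ew j * Phi (A, B :\ j).
Proof.
under eq_bigr do rewrite ffunE mulrDl.
rewrite big_split /=; congr (_ + _).
  case: (2 < #|A|)%N; first exact: sum_delta_mulr.
  by rewrite big1 // => v _; rewrite mul0r.
under eq_bigr do rewrite -mulrA.
by rewrite -mulr_sumr sum_delta_mulr.
Qed.

Lemma sum_phiG_basis A B (Psi : GB p -> S k p) :
  \sum_g phiG_basis k (A, B) g * Psi g =
    if (#|A| == 2)%N && (1 <= #|B|)%N then
      \sum_(i in A) \sum_(j in A | (i < j)%N) (ev i * Psi (B, j) - ev j * Psi (B, i))
    else 0.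
Proof.
under eq_bigr do rewrite ffunE.
case: ifP => _; last by rewrite big1 // => g _; rewrite mul0r.
under eq_bigr do rewrite mulr_suml.
rewrite exchange_big; apply: eq_bigr => i _.
under eq_bigr do rewrite mulr_suml.
rewrite exchange_big; apply: eq_bigr => j _.
under eq_bigr do rewrite mulrBl.
by rewrite sumrB !sum_delta1_mulr.
Qed.

Lemma sgn0 : sgn 0 = 1.
Proof. exact: expr0. Qed.

Lemma phiG_basis_eq0 A B h : (#|A| != 2)%N -> phiG_basis k (A, B) h = 0.
Proof. by move=> /negbTE A2; rewrite ffunE A2. Qed.

Lemma dG_phiG_basis_card2 A B h : #|A| = 2%N -> (2 <= #|B|)%N ->
  \sum_g phiG_basis k (A, B) g * dG_basis k g h
  = \sum_v dF_basis k (A, B) v * phiG_basis k v h.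
Proof.
move=> A2 B2.
rewrite sum_phiG_basis sum_dF_basis A2 ltnW //= subnn sgn0 mul1r add0r.
have BD1 l : l \in B -> (1 <= #|B :\ l|)%N by move=> lB; rewrite (cardsD1 l B) lB in B2.
under [RHS]eq_bigr => l lB do rewrite ffunE A2 BD1 //= mulr_sumr.
rewrite exchange_big; apply: eq_bigr => i _.
under [RHS]eq_bigr do rewrite mulr_sumr.
rewrite exchange_big; apply: eq_bigr => j _.
rewrite !ffunE !mulr_sumr -sumrB; apply: eq_bigr => l _.
by case: (h == (B :\ l, j)); case: (h == (B :\ l, i)); ring.
Qed.

Lemma phiG_basis_set2 B h i j : (i < j)%N ->
  phiG_basis k ([set i; j], B) h
  = ev i * ((1 <= #|B|)%N && (h == (B, j)))%:R
    - ev j * ((1 <= #|B|)%N && (h == (B, i)))%:R.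
Proof.
move=> ij; rewrite ffunE cards2 ltn_ord_neq //= big_set2_ltn //.
by case: (1 <= #|B|)%N; case: (h == (B, i)); case: (h == (B, j)); rewrite /=; ring.
Qed.

Lemma dG_phiG_basis A B h : (2 <= #|A|)%N -> (4 <= #|A| + #|B|)%N ->
  \sum_g phiG_basis k (A, B) g * dG_basis k g h
  = \sum_v dF_basis k (A, B) v * phiG_basis k v h.
Proof.
move=> A2 AB4; have [A_2|A_neq2] := eqVneq #|A| 2%N.
  by apply: dG_phiG_basis_card2 => //; lia.
have A_gt2 : (2 < #|A|)%N by rewrite ltn_neqAle eq_sym A_neq2.
rewrite sum_phiG_basis (negbTE A_neq2) /= sum_dF_basis A_gt2.
rewrite [X in _ + _ * X]big1 ?mulr0 ?addr0 => [|j _]; last by rewrite phiG_basis_eq0 ?mulr0.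
have [/card3_sorted[a [b [c [ab bc ->]]]]|A_neq3] := eqVneq #|A| 3%N.
  apply/esym/(koszul_set3_eq0 (Phi := fun X => phiG_basis k (X, B) h)) => //.
  exact: phiG_basis_set2.
rewrite big1 // => j jA; rewrite phiG_basis_eq0 ?mulr0 //.
by rewrite (cardsD1 j A) jA in A_neq2 A_neq3 *; lia.
Qed.

Lemma phi0_basis_set2 i j : (i < j)%N ->
  phi0_basis k ([set i; j], set0) = ev i * ew j - ev j * ew i.
Proof. by move=> ij; rewrite /= cards2 ltn_ord_neq // cards0 big_set2_ltn. Qed.

Lemma dG1_phiG_basis A B : (2 <= #|A|)%N -> (#|A| + #|B| = 3)%N ->
  \sum_g phiG_basis k (A, B) g * dG1_basis k g
  = \sum_v dF_basis k (A, B) v * phi0_basis k v.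
Proof.
move=> A2 AB3; rewrite sum_phiG_basis sum_dF_basis.
have [A_2|A_neq2] := eqVneq #|A| 2%N.
  have /cards1P[b ->] : #|B| == 1%N by apply/eqP; lia.
  rewrite A_2 cards1 /= subnn sgn0 mul1r add0r big_set1 setDv /= A_2 cards0 /=.
  have -> : pos [set b] b = 1%N by rewrite pos_sum big_set1 leqnn.
  rewrite !mulr_sumr; apply: eq_bigr => i _; rewrite !mulr_sumr; apply: eq_bigr => j _.
  rewrite !big_set1 /sgn; ring.
have A_gt2 : (2 < #|A|)%N by rewrite ltn_neqAle eq_sym A_neq2.
have /eqP -> : B == set0 by rewrite -cards_eq0; lia.
rewrite /= A_gt2 big_set0 mulr0 addr0.
have /card3_sorted[a [b [c [ab bc ->]]]] : #|A| = 3%N by lia.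
apply/esym/(koszul_set3_eq0 (Phi := fun X => phi0_basis k (X, set0))) => //.
exact: phi0_basis_set2.
Qed.

End ChainMap.

Theorem proposition7p8 (k : fieldType) (p : nat) :
  (3 <= p)%N ->
  (forall x : Fel k p, inF 1 x -> dG1 (phiG x) = phi0 (dF x)) /\
  (forall (n : nat) (x : Fel k p), (2 <= n)%N -> inF n x ->
     exists c : {ffun {set idx p} -> S k p},
       forall h : GB p,
         dG (phiG x) h - phiG (dF x) h
         = \sum_(B : {set idx p} | #|B| == n) c B * @relG k p B h).
Proof.
move=> _; split=> [x xF | n x n2 xF].
  rewrite /dG1 /phi0.
  under eq_bigr do rewrite ffunE.
  under [RHS]eq_bigr do rewrite ffunE.
  apply: eq_sum_comp => -[A B] /xF[A2 AB].
  exact: dG1_phiG_basis.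
exists [ffun=> 0] => h.
suff -> : dG (phiG x) h = phiG (dF x) h.
  by rewrite subrr big1 // => B _; rewrite ffunE mul0r.
rewrite /dG /phiG !ffunE.
under eq_bigr do rewrite ffunE.
under [RHS]eq_bigr do rewrite ffunE.
apply: eq_sum_comp => -[A B] /xF[A2 AB].
by apply: dG_phiG_basis => //; lia.
Qed.
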